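(* Let $\mathcal H$ be a Hilbert space of finite dimension $d$ with fixed orthonormal basis $\{|i\rangle\}_{i=1}^d$, and let $\mathcal L(t)$, $t\ge0$, be the generator of a quantum dynamics with propagators $\mathcal E_{t_2,t_1}$ ($t_2\ge t_1\ge0$) obtained by integrating $\frac{d}{dt}\rho(t)=\mathcal L(t)[\rho(t)]$. Each of the following conditions individually implies that the dynamics is NCGD: (i) $\mathcal L_{\mathrm{pc}}(t)=0$ for all $t\ge0$; (ii) $\mathcal L_{\mathrm{cp}}(t)=0$ for all $t\ge0$; (iii) $\mathcal L(t_2)\circ\Delta\circ\mathcal L(t_1)=\mathcal L(t_2)\circ\mathcal L(t_1)$ for all $t_2\ge t_1\ge0$; (iv) $[\mathcal L(t),\Delta]=\mathcal L(t)\circ\Delta-\Delta\circ\mathcal L(t)=0$ for all $t\ge0$.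
   Context: A generator $\mathcal L(t)$ is a linear, trace-preserving and Hermiticity-preserving map $\mathcal B(\mathcal H)\to\mathcal B(\mathcal H)$, where $\mathcal B(\mathcal H)$ is the space of linear operators on $\mathcal H$; the propagators satisfy $\rho(t_2)=\mathcal E_{t_2,t_1}[\rho(t_1)]$. The complete dephasing map is $\Delta(X)=\sum_{i=1}^d |i\rangle\langle i|X|i\rangle\langle i|$. Set $\mathcal B_{\mathrm p}(\mathcal H)=\operatorname{Image}(\Delta)$, $\mathcal B_{\mathrm c}(\mathcal H)=\operatorname{Kernel}(\Delta)$; with $\Pi_{\mathrm p}=\Delta$, $\Pi_{\mathrm c}=\mathrm{id}-\Delta$, the blocks are $\mathcal L_{xy}(t)=\Pi_x\mathcal L(t)\Pi_y$ viewed as maps $\mathcal B_y(\mathcal H)\to\mathcal B_x(\mathcal H)$. A dynamics is NCGD iff $\Delta\circ\mathcal E_{t_3,t_2}\circ\Delta\circ\mathcal E_{t_2,t_1}\circ\Delta=\Delta\circ\mathcal E_{t_3,t_1}\circ\Delta$ for all $t_3\ge t_2\ge t_1\ge 0$. *)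

From HB Require Import structures.
From mathcomp Require Import all_boot all_order all_algebra.
From mathcomp Require Import all_classical all_reals all_analysis.
From mathcomp Require Import complex.
Set Implicit Arguments. Unset Strict Implicit. Unset Printing Implicit Defensive.
Import Order.TTheory GRing.Theory Num.Theory.
Import numFieldNormedType.Exports.
Local Open Scope classical_set_scope.
Local Open Scope ring_scope.

Section Defs.
Variable R : realType.
Local Notation C := R[i].

(** Operators on H = C^d (orthonormal basis |i>, i : 'I_d) are d x d complex
    matrices; superoperators are functions 'M[C]_d -> 'M[C]_d. *)

(** Complete dephasing map  Delta(X) = sum_i |i><i| X |i><i|. *)
Definition dephase (d : nat) (X : 'M[C]_d) : 'M[C]_d :=
  \matrix_(i, j) (if i == j then X i j else 0).

Definition Pi_p (d : nat) (X : 'M[C]_d) : 'M[C]_d := dephase X.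
Definition Pi_c (d : nat) (X : 'M[C]_d) : 'M[C]_d := X - dephase X.

Definition Lblock (d : nat) (Pix : 'M[C]_d -> 'M[C]_d) (L : 'M[C]_d -> 'M[C]_d)
  (Piy : 'M[C]_d -> 'M[C]_d) : 'M[C]_d -> 'M[C]_d := fun X => Pix (L (Piy X)).

Definition adjM (d : nat) (X : 'M[C]_d) : 'M[C]_d := (map_mx (@conjc R) X)^T.

(** A generator: linear, trace-annihilating (so that the generated dynamics is
    trace preserving) and Hermiticity preserving. *)
Definition is_generator (d : nat) (L : 'M[C]_d -> 'M[C]_d) : Prop :=
  [/\ (forall (a : C) (X Y : 'M[C]_d), L (a *: X + Y) = a *: L X + L Y),
      (forall X, \tr (L X) = 0) &
      (forall X, L (adjM X) = adjM (L X))].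

(** Derivative of a matrix-valued function of a real variable at t:
    C^{d x d} is viewed as the real space R^{2 d^2} (real and imaginary parts
    of every entry). *)
Definition has_mx_deriv (d : nat) (f : R -> 'M[C]_d) (t : R) (D : 'M[C]_d) : Prop :=
  forall i j, is_derive t 1 (fun s => (@complex.Re R) (f s i j)) ((@complex.Re R) (D i j)) /\
              is_derive t 1 (fun s => (@complex.Im R) (f s i j)) ((@complex.Im R) (D i j)).

Definition mx_right_cont (d : nat) (f : R -> 'M[C]_d) (t : R) : Prop :=
  forall i j, (fun s => (@complex.Re R) (f s i j)) @ t^'+ --> (@complex.Re R) (f t i j) /\
              (fun s => (@complex.Im R) (f s i j)) @ t^'+ --> (@complex.Im R) (f t i j).

(** Local boundedness of the generator on [0, +oo): standing regularity
    assumption needed for "integrating" the master equation. *)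
Definition locally_bounded (d : nat) (L : R -> 'M[C]_d -> 'M[C]_d) : Prop :=
  forall (T : R) (X : 'M[C]_d), exists M : R, forall t, 0 <= t <= T ->
    forall i j, `|(@complex.Re R) (L t X i j)| <= M /\ `|(@complex.Im R) (L t X i j)| <= M.

Definition propagators (d : nat) (L : R -> 'M[C]_d -> 'M[C]_d)
  (E : R -> R -> 'M[C]_d -> 'M[C]_d) : Prop :=
  [/\ (forall t X, 0 <= t -> E t t X = X),
      (forall t1 t2 t3 X, 0 <= t1 -> t1 <= t2 -> t2 <= t3 ->
         E t3 t2 (E t2 t1 X) = E t3 t1 X),
      (forall t1 t X, 0 <= t1 -> t1 < t ->
         has_mx_deriv (fun s => E s t1 X) t (L t (E t t1 X))) &
      (forall t1 X, 0 <= t1 -> mx_right_cont (fun s => E s t1 X) t1)].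

Definition NCGD (d : nat) (E : R -> R -> 'M[C]_d -> 'M[C]_d) : Prop :=
  forall t1 t2 t3, 0 <= t1 -> t1 <= t2 -> t2 <= t3 ->
    forall X : 'M[C]_d,
      dephase (E t3 t2 (dephase (E t2 t1 (dephase X)))) =
      dephase (E t3 t1 (dephase X)).

End Defs.

From HB Require Import structures.
From mathcomp Require Import all_boot all_order all_algebra.
From mathcomp Require Import all_classical all_reals all_analysis.
From mathcomp Require Import complex.
From mathcomp Require Import ring lra.
Import Order.TTheory GRing.Theory Num.Theory.
Import numFieldNormedType.Exports.
Local Open Scope classical_set_scope.
Local Open Scope ring_scope.
Local Open Scope complex_scope.
Set Implicit Arguments. Unset Strict Implicit. Unset Printing Implicit Defensive.

(* Each condition makes a linear image of a solution of the master equation vanish: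
   h(u) := P(E_{u,s} Y) solves h' = A(u) h with h(s) = 0, and a Gronwall estimate on the
   squared norm of h forces h = 0 (E is known only through the master equation, so this
   uniqueness argument stands in for an explicit formula).  For (i), P = Delta and
   A = Delta o L; for (ii), P = Pi_c and A = Pi_c o L; for (iii), P = L(t) o Pi_c and A = 0,
   after which Pi_c E_{t2,t1} Delta X is a stationary point of the flow; (iv) implies (i).
   In each case the coherences created between t1 and t2 are never fed back into the
   populations, which is exactly what NCGD needs. *)

Section LinearFunctions.
Variables (K : pzRingType) (U V : lmodType K) (F : U -> V).
Hypothesis HF : linear F.

Definition mklinear : {linear U -> V} := HB.pack F (GRing.isLinear.Build _ _ _ _ F HF).

Lemma linear_fun0 : F 0 = 0. Proof. exact: (raddf0 mklinear). Qed.
Lemma linear_funD X Y : F (X + Y) = F X + F Y. Proof. exact: (raddfD mklinear). Qed.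
Lemma linear_funB X Y : F (X - Y) = F X - F Y. Proof. exact: (raddfB mklinear). Qed.
End LinearFunctions.

Lemma linear_comp (K : pzRingType) (U V W : lmodType K) (F : V -> W) (G : U -> V) :
  linear F -> linear G -> linear (fun X => F (G X)).
Proof. by move=> HF HG a X Y; rewrite HG HF. Qed.

Lemma is_derive_sumr (R : realType) (I : finType) (h : I -> R -> R) (dh : I -> R) (t : R) :
  (forall k, is_derive t 1 (h k) (dh k)) ->
  is_derive t 1 (fun s => \sum_k h k s) (\sum_k dh k).
Proof.
move=> hD; rewrite -fct_sumE.
by elim/big_ind2: _ => // *; [exact: is_derive_cst | exact: is_deriveD].
Qed.

Lemma cvg_sumr (R : realType) (T : Type) (F : set_system T) {FF : Filter F}
    (I : finType) (h : I -> T -> R) (a : I -> R) :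
  (forall k, h k @ F --> a k) -> (fun s => \sum_k h k s) @ F --> \sum_k a k.
Proof. by move=> ha; apply: cvg_big => //; exact: add_continuous. Qed.

Lemma is_derive_expR_mull (R : realType) (c u : R) :
  is_derive u 1 (fun x : R => expR (c * x)) (c * expR (c * u)).
Proof.
have cxD : is_derive u 1 (fun x : R => c * x) c.
  by have := is_deriveZ c (is_derive_id u 1); rewrite /GRing.scale /= mulr1.
by have := is_derive1_comp (is_derive_expR _) cxD; rewrite mulrC.
Qed.

Lemma gronwall (R : realType) (f df : R -> R) (c s T : R) : s <= T ->
  (forall u, s < u <= T -> is_derive u 1 f (df u)) ->
  (forall u, s < u <= T -> df u <= c * f u) ->
  f @ s^'+ --> f s -> f T <= expR (c * (T - s)) * f s.
Proof.
rewrite le_eqVlt => /predU1P[<- _ _ _ | sT fD dfc fs].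
  by rewrite subrr mulr0 expR0 mul1r.
pose e (u : R) := expR (- c * u).
pose g (u : R) := e u * f u.
have gD (u : R) : s < u <= T -> is_derive u 1 g (e u * (df u - c * f u)).
  move=> su; apply: is_derive_eq; first exact: is_deriveM (is_derive_expR_mull _ u) (fD u su).
  by rewrite /GRing.scale /= /e; ring.
have gc : {within `[s, T], continuous g}.
  apply/continuous_within_itvP => //; split.
  - move=> u; rewrite in_itv /= => /andP[su uT].
    have /gD[gu _] : s < u <= T by rewrite su ltW.
    by apply: differentiable_continuous; exact/derivable1_diffP.
  - have [es _] := is_derive_expR_mull (- c) s.
    apply: cvgM fs; apply: cvg_at_right_filter.
    by apply: differentiable_continuous; exact/derivable1_diffP.
  - have /gD[gT _] : s < T <= T by rewrite sT lexx.
    by apply: cvg_at_left_filter; apply: differentiable_continuous; exact/derivable1_diffP.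
have gD_oo u : u \in `]s, T[ -> is_derive u 1 g (e u * (df u - c * f u)).
  by rewrite in_itv /= => /andP[su uT]; apply: gD; rewrite su ltW.
have [u /[!in_itv] /= /andP[su uT] gTs] := MVT sT gD_oo gc.
have gTs_le : g T <= g s.
  rewrite -subr_le0 gTs; apply: mulr_le0_ge0; last by rewrite subr_ge0 ltW.
  by rewrite pmulr_rle0 ?expR_gt0 // subr_le0 dfc // su ltW.
have eK x : expR (c * x) * e x = 1 by rewrite /e -expRD mulNr addrN expR0.
rewrite -[f T]mul1r -(eK T) -mulrA (le_trans (ler_wpM2l _ gTs_le)) ?expR_ge0 //.
by rewrite /g mulrA -expRD mulNr mulrBr.
Qed.

Lemma sum_bilinear_le (R : realFieldType) (I : finType) (a : I -> I -> R) (x : I -> R) K :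
  (forall q p, `|a q p| <= K) ->
  \sum_q \sum_p x q * (a q p * x p) <= K * #|I|%:R * \sum_q x q ^+ 2.
Proof.
move=> aK; rewrite -(ler_pM2l (ltr0Sn _ 1)) mulr_sumr.
have term q p : 2 * (x q * (a q p * x p)) <= K * (x q ^+ 2 + x p ^+ 2).
  have K0 := le_trans (normr_ge0 _) (aK q p).
  have amg := (leif_mean_square_scaled `|x q| `|x p|).1.
  rewrite !real_normK ?num_real // in amg.
  have xqp0 : 0 <= `|x q| * `|x p| by rewrite mulr_ge0.
  apply: (le_trans (ler_norm _)); rewrite !normrM normr_nat.
  have := aK q p; rewrite mulr2n in amg *; nra.
apply: (le_trans (ler_sum _ (fun q _ => _ : _ <= \sum_p K * (x q ^+ 2 + x p ^+ 2)))).
  by move=> q _; rewrite mulr_sumr; apply: ler_sum => p _; exact: term.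
have sum_cst (y : R) : \sum_(i : I) y = y * #|I|%:R by rewrite mulr_natr; exact: sumr_const.
under eq_bigr do rewrite -mulr_sumr big_split /= sum_cst.
rewrite -mulr_sumr big_split /= sum_cst -mulr_suml.
by rewrite le_eqVlt; apply/orP; left; apply/eqP; ring.
Qed.

Section MatrixCoordinates.
Variables (R : realType) (d : nat).
Local Notation M := 'M[R[i]]_d.

Definition mxcoord (p : 'I_d * 'I_d * bool) (X : M) : R :=
  (if p.2 then @complex.Im R else @complex.Re R) (X p.1.1 p.1.2).

Definition mxbasis (p : 'I_d * 'I_d * bool) : M :=
  (if p.2 then 'i else 1) *: delta_mx p.1.1 p.1.2.

Lemma mxcoord_is_zmod_morphism p : zmod_morphism (mxcoord p).
Proof. by move=> X Y; rewrite /mxcoord !mxE; case: p.2; case: (X _ _) (Y _ _) => [? ?] [? ?]. Qed.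

HB.instance Definition _ p :=
  GRing.isZmodMorphism.Build M R (mxcoord p) (mxcoord_is_zmod_morphism p).

Lemma mxcoordZr p (r : R) X : mxcoord p (r%:C *: X) = r * mxcoord p X.
Proof. by rewrite /mxcoord mxE; case: p.2; case: (X _ _) => a b /=; rewrite !mul0r ?subr0 ?addr0. Qed.

Lemma mxcoord_decomp X : X = \sum_p (mxcoord p X)%:C *: mxbasis p.
Proof.
have -> : \sum_p (mxcoord p X)%:C *: mxbasis p =
    \sum_i \sum_j \sum_b (mxcoord (i, j, b) X)%:C *: mxbasis (i, j, b).
  by rewrite !pair_bigA; apply: eq_bigr => -[[i j] b].
rewrite {1}(matrix_sum_delta X); apply: eq_bigr => i _; apply: eq_bigr => j _.
rewrite big_bool /mxbasis /mxcoord /= !scalerA mulr1 -scalerDl.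
by congr (_ *: _); rewrite [LHS]complexE addrC mulrC.
Qed.

Lemma mxcoord_linear F q X : linear F ->
  mxcoord q (F X) = \sum_p mxcoord q (F (mxbasis p)) * mxcoord p X.
Proof.
move=> HF; have -> : F = mklinear HF by [].
rewrite {1}(mxcoord_decomp X) linear_sum raddf_sum; apply: eq_bigr => p _.
by rewrite (linearZZ (mklinear HF)) /= mxcoordZr mulrC.
Qed.

Lemma mxcoord_eq0 X : (forall p, mxcoord p X = 0) -> X = 0.
Proof. by move=> X0; rewrite (mxcoord_decomp X) big1 // => p _; rewrite X0 scale0r. Qed.

Lemma has_mx_derivE (f : R -> M) t D : has_mx_deriv f t D <->
  forall p, is_derive t 1 (fun s => mxcoord p (f s)) (mxcoord p D).
Proof.
split=> [fD [[i j] []] | fD i j]; [exact: (fD i j).2 | exact: (fD i j).1 |].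
by split; [exact: (fD (i, j, false)) | exact: (fD (i, j, true))].
Qed.

Lemma mx_right_contE (f : R -> M) t : mx_right_cont f t <->
  forall p, (fun s => mxcoord p (f s)) @ t^'+ --> mxcoord p (f t).
Proof.
split=> [fc [[i j] []] | fc i j]; [exact: (fc i j).2 | exact: (fc i j).1 |].
by split; [exact: (fc (i, j, false)) | exact: (fc (i, j, true))].
Qed.

Lemma locally_boundedE (A : R -> M -> M) : locally_bounded A <->
  forall T X, exists K : R, forall t, 0 <= t <= T -> forall p, `|mxcoord p (A t X)| <= K.
Proof.
split=> Abd T X; have [K AK] := Abd T X; exists K => t t0T.
  by case=> [[i j] []]; have [] := AK t t0T i j.
by move=> i j; split; [exact: (AK t t0T (i, j, false)) | exact: (AK t t0T (i, j, true))].
Qed.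

End MatrixCoordinates.
Arguments mxbasis {R d} p.

Section MatrixODE.
Variables (R : realType) (d : nat).
Local Notation M := 'M[R[i]]_d.

Lemma has_mx_deriv_linear (F : M -> M) (f : R -> M) t D : linear F ->
  has_mx_deriv f t D -> has_mx_deriv (fun s => F (f s)) t (F D).
Proof.
move=> HF /has_mx_derivE fD; apply/has_mx_derivE => q.
rewrite (funext (fun s => mxcoord_linear q (f s) HF)) mxcoord_linear //.
by apply: is_derive_sumr => p; exact: is_deriveZ.
Qed.

Lemma has_mx_derivB (f g : R -> M) t Df Dg : has_mx_deriv f t Df ->
  has_mx_deriv g t Dg -> has_mx_deriv (fun s => f s - g s) t (Df - Dg).
Proof.
move=> /has_mx_derivE fD /has_mx_derivE gD; apply/has_mx_derivE => p.
rewrite raddfB (funext (fun s => raddfB (mxcoord p) (f s) (g s))).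
exact: is_deriveB.
Qed.

Lemma has_mx_deriv_cst (A : M) t : has_mx_deriv (fun=> A) t 0.
Proof. by apply/has_mx_derivE => p; rewrite raddf0; exact: is_derive_cst. Qed.

Lemma mx_right_cont_linear (F : M -> M) (f : R -> M) t : linear F ->
  mx_right_cont f t -> mx_right_cont (fun s => F (f s)) t.
Proof.
move=> HF /mx_right_contE fc; apply/mx_right_contE => q.
rewrite (funext (fun s => mxcoord_linear q (f s) HF)) mxcoord_linear //.
by apply: cvg_sumr => p; exact: cvgMl_tmp.
Qed.

Lemma mx_right_contB (f g : R -> M) t : mx_right_cont f t ->
  mx_right_cont g t -> mx_right_cont (fun s => f s - g s) t.
Proof.
move=> /mx_right_contE fc /mx_right_contE gc; apply/mx_right_contE => p.
rewrite raddfB (funext (fun s => raddfB (mxcoord p) (f s) (g s))).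
by apply: cvgB; [exact: fc | exact: gc].
Qed.

Lemma mx_right_cont_cst (A : M) t : mx_right_cont (fun=> A) t.
Proof. by apply/mx_right_contE => p; exact: cvg_cst. Qed.

Lemma locally_bounded_coef (A : R -> M -> M) T : locally_bounded A ->
  exists K : R, forall u, 0 <= u <= T -> forall p q, `|mxcoord q (A u (mxbasis p))| <= K.
Proof.
move=> /locally_boundedE Abd; have [B AB] := choice (fun p => Abd T (mxbasis p)).
exists (\sum_p `|B p|) => u uT p q; apply: le_trans (AB p u uT q) _.
by rewrite (le_trans (ler_norm _)) // (bigD1 p) //= lerDl sumr_ge0.
Qed.

Definition mxsqnorm (X : M) : R := \sum_p mxcoord p X ^+ 2.

Lemma mxsqnorm_le0 X : mxsqnorm X <= 0 -> X = 0.
Proof.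
move=> X0; apply: mxcoord_eq0 => p; apply/eqP; rewrite -sqrf_eq0 eq_le sqr_ge0 andbT.
apply: le_trans X0; rewrite /mxsqnorm (bigD1 p) //= lerDl.
by apply: sumr_ge0 => q _; exact: sqr_ge0.
Qed.

Lemma mx_linear_ode_zero (A : R -> M -> M) (h : R -> M) (s T : R) :
  (forall u, 0 <= u -> linear (A u)) -> locally_bounded A -> 0 <= s -> s <= T ->
  (forall u, s < u <= T -> has_mx_deriv h u (A u (h u))) ->
  mx_right_cont h s -> h s = 0 -> h T = 0.
Proof.
move=> Alin Abd s0 sT hD /mx_right_contE hc hs0.
have [K AK] := locally_bounded_coef T Abd.
pose phi u := mxsqnorm (h u).
pose dphi u := \sum_q mxcoord q (h u) * mxcoord q (A u (h u)) *+ 2.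
have phiD u : s < u <= T -> is_derive u 1 phi (dphi u).
  move=> /hD /has_mx_derivE hDu; apply: is_derive_sumr => q.
  by apply: is_derive_eq; rewrite mulr2n.
have dphi_le u : s < u <= T -> dphi u <= (K * #|{: 'I_d * 'I_d * bool}|%:R) *+ 2 * phi u.
  move=> /andP[su uT]; have u0 : 0 <= u by rewrite (le_trans s0) // ltW.
  rewrite /dphi sumrMnl mulrnAl; apply: ler_wMn2r.
  under eq_bigr do rewrite (mxcoord_linear _ _ (Alin u u0)) mulr_sumr.
  by apply: sum_bilinear_le => q p; apply: AK; rewrite u0 uT.
have phic : phi @ s^'+ --> phi s.
  by apply: cvg_sumr => q; apply: cvgM; exact: hc.
have phis0 : phi s = 0.
  by rewrite /phi hs0 /mxsqnorm big1 // => q _; rewrite raddf0 expr0n.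
by apply: mxsqnorm_le0; have := gronwall sT phiD dphi_le phic; rewrite phis0 mulr0.
Qed.

End MatrixODE.

Section Dephasing.
Variables (R : realType) (d : nat).
Local Notation M := 'M[R[i]]_d.

Lemma dephase_linear : linear (@dephase R d).
Proof.
move=> a X Y; apply/matrixP => i j; rewrite !mxE.
by case: eqP => _ //; rewrite mulr0 addr0.
Qed.

Lemma Pi_c_linear : linear (@Pi_c R d).
Proof. by move=> a X Y; rewrite /Pi_c dephase_linear scalerBr opprD addrACA. Qed.

Lemma dephase_idem (X : M) : dephase (dephase X) = dephase X.
Proof. by apply/matrixP => i j; rewrite !mxE; case: eqP => // ->; rewrite eqxx. Qed.

Lemma dephase0 : dephase (0 : M) = 0.
Proof. exact: linear_fun0 dephase_linear. Qed.

Lemma dephase_Pi_c (X : M) : dephase (Pi_c X) = 0.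
Proof. by rewrite /Pi_c (linear_funB dephase_linear) dephase_idem subrr. Qed.

Lemma Pi_c_dephase (X : M) : Pi_c (dephase X) = 0.
Proof. by rewrite /Pi_c dephase_idem subrr. Qed.

Lemma dephase_add_Pi_c (X : M) : dephase X + Pi_c X = X.
Proof. by rewrite /Pi_c addrC subrK. Qed.

Lemma locally_bounded_mask (P : M -> M) (A : R -> M -> M) :
  (forall Y i j, P Y i j = Y i j \/ P Y i j = 0) ->
  locally_bounded A -> locally_bounded (fun t X => P (A t X)).
Proof.
move=> Pmask Abd T X; have [K AK] := Abd T X; exists K => t tT i j.
have [ReK ImK] := AK t tT i j; have K0 := le_trans (normr_ge0 _) ReK.
by case: (Pmask (A t X) i j) => ->; rewrite ?normr0.
Qed.

Lemma dephase_mask (Y : M) i j : dephase Y i j = Y i j \/ dephase Y i j = 0.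
Proof. by rewrite mxE; case: eqP; [left | right]. Qed.

Lemma Pi_c_mask (Y : M) i j : Pi_c Y i j = Y i j \/ Pi_c Y i j = 0.
Proof. by rewrite !mxE; case: eqP => _; [right; rewrite subrr | left; rewrite subr0]. Qed.

Lemma Lpc_eq0_of_commute (F : M -> M) : linear F ->
  (forall X, F (dephase X) - dephase (F X) = 0) ->
  forall X, Lblock (@Pi_p R d) F (@Pi_c R d) X = 0.
Proof.
move=> HF FD X; rewrite /Lblock /Pi_p.
by move/eqP: (FD (Pi_c X)); rewrite subr_eq0 => /eqP <-; rewrite dephase_Pi_c (linear_fun0 HF).
Qed.

End Dephasing.
Arguments dephase_linear {R d}.
Arguments Pi_c_linear {R d}.

Section Propagators.
Variables (R : realType) (d : nat).
Local Notation M := 'M[R[i]]_d.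
Variables (L : R -> M -> M) (E : R -> R -> M -> M).
Hypothesis L_gen : forall t, 0 <= t -> is_generator (L t).
Hypothesis L_bounded : locally_bounded L.
Hypothesis E_prop : propagators L E.

Lemma generator_linear t : 0 <= t -> linear (L t).
Proof. by move=> /L_gen[]. Qed.

Lemma propagator_ode_unique (h : R -> M) s t : 0 <= s -> s <= t ->
  (forall u, s < u <= t -> has_mx_deriv h u (L u (h u))) ->
  mx_right_cont h s -> h t = E t s (h s).
Proof.
move=> s0 st hD hc; have [Eid _ ED Ec] := E_prop; apply/eqP; rewrite -subr_eq0; apply/eqP.
pose g u := h u - E u s (h s).
apply: (mx_linear_ode_zero (h := g) generator_linear L_bounded s0 st).
- move=> u /[dup] /andP[su _] /hD hu; have u0 : 0 <= u by rewrite (le_trans s0) ?ltW.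
  by rewrite /g (linear_funB (generator_linear u0)); exact: has_mx_derivB hu (ED _ _ _ s0 su).
- exact: mx_right_contB hc (Ec _ _ s0).
- by rewrite /g Eid ?subrr.
Qed.

Lemma propagatorB s t X Y : 0 <= s -> s <= t -> E t s (X - Y) = E t s X - E t s Y.
Proof.
move=> s0 st; have [Eid _ ED Ec] := E_prop.
have := propagator_ode_unique (h := fun u => E u s X - E u s Y) s0 st.
rewrite /= !Eid // => -> //.
- move=> u /andP[su _]; have u0 : 0 <= u by rewrite (le_trans s0) ?ltW.
  rewrite (linear_funB (generator_linear u0)).
  exact: has_mx_derivB (ED _ _ _ s0 su) (ED _ _ _ s0 su).
- exact: mx_right_contB (Ec _ _ s0) (Ec _ _ s0).
Qed.

Lemma propagator0 s t : 0 <= s -> s <= t -> E t s 0 = 0.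
Proof. by move=> s0 st; rewrite -[X in E t s X](subrr (0 : M)) propagatorB // subrr. Qed.

Lemma propagator_stationary s t V : 0 <= s -> s <= t ->
  (forall u, s < u <= t -> L u V = 0) -> E t s V = V.
Proof.
move=> s0 st LV; have /= <- // := propagator_ode_unique (h := fun=> V) s0 st.
- by move=> u /LV ->; exact: has_mx_deriv_cst.
- exact: mx_right_cont_cst.
Qed.

Lemma propagator_ker_invariant (P : M -> M) (A : R -> M -> M) s t Y :
  linear P -> (forall u, 0 <= u -> linear (A u)) -> locally_bounded A ->
  0 <= s -> s <= t -> (forall u Z, s < u <= t -> P (L u Z) = A u (P Z)) ->
  P Y = 0 -> P (E t s Y) = 0.
Proof.
move=> Plin Alin Abd s0 st PLA PY; have [Eid _ ED Ec] := E_prop.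
apply: (mx_linear_ode_zero (h := fun u => P (E u s Y)) Alin Abd s0 st).
- move=> u su; rewrite -PLA //.
  by apply: has_mx_deriv_linear Plin _; apply: ED s0 _; case/andP: su.
- exact: mx_right_cont_linear Plin (Ec _ _ s0).
- by rewrite /= Eid.
Qed.

Lemma NCGD_of_dephase_coherences :
  (forall t1 t2 t3 X, 0 <= t1 -> t1 <= t2 -> t2 <= t3 ->
     dephase (E t3 t2 (Pi_c (E t2 t1 (dephase X)))) = 0) -> NCGD E.
Proof.
move=> coh0 t1 t2 t3 t10 t12 t23 X; have [_ Ecomp _ _] := E_prop.
have t20 : 0 <= t2 := le_trans t10 t12.
move: (coh0 t1 t2 t3 X t10 t12 t23).
rewrite /Pi_c propagatorB // (linear_funB dephase_linear) Ecomp // => /eqP.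
by rewrite subr_eq0 => /eqP ->.
Qed.

Lemma NCGD_Lpc0 :
  (forall t, 0 <= t -> forall X, Lblock (@Pi_p R d) (L t) (@Pi_c R d) X = 0) -> NCGD E.
Proof.
move=> Lpc0; apply: NCGD_of_dephase_coherences => t1 t2 t3 X t10 t12 t23.
have t20 : 0 <= t2 := le_trans t10 t12.
apply: (propagator_ker_invariant (A := fun u Z => dephase (L u Z))) => //.
- exact: dephase_linear.
- by move=> u u0; apply: linear_comp (generator_linear u0); exact: dephase_linear.
- by apply: locally_bounded_mask L_bounded; exact: dephase_mask.
- move=> u Z /andP[t2u _]; have u0 : 0 <= u by rewrite (le_trans t20) ?ltW.
  rewrite -{1}(dephase_add_Pi_c Z) (linear_funD (generator_linear u0)).
  by rewrite (linear_funD dephase_linear) [X in _ + X]Lpc0 ?addr0.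
- exact: dephase_Pi_c.
Qed.

Lemma NCGD_Lcp0 :
  (forall t, 0 <= t -> forall X, Lblock (@Pi_c R d) (L t) (@Pi_p R d) X = 0) -> NCGD E.
Proof.
move=> Lcp0; apply: NCGD_of_dephase_coherences => t1 t2 t3 X t10 t12 t23.
have t20 : 0 <= t2 := le_trans t10 t12.
suff -> : Pi_c (E t2 t1 (dephase X)) = 0 by rewrite propagator0 // dephase0.
apply: (propagator_ker_invariant (A := fun u Z => Pi_c (L u Z))) => //.
- exact: Pi_c_linear.
- by move=> u u0; apply: linear_comp (generator_linear u0); exact: Pi_c_linear.
- by apply: locally_bounded_mask L_bounded; exact: Pi_c_mask.
- move=> u Z /andP[t1u _]; have u0 : 0 <= u by rewrite (le_trans t10) ?ltW.
  rewrite -{1}(dephase_add_Pi_c Z) (linear_funD (generator_linear u0)).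
  by rewrite (linear_funD Pi_c_linear) [X in X + _]Lcp0 ?add0r.
- exact: Pi_c_dephase.
Qed.

Lemma NCGD_LdephaseL :
  (forall t1 t2, 0 <= t1 -> t1 <= t2 -> forall X, L t2 (dephase (L t1 X)) = L t2 (L t1 X)) ->
  NCGD E.
Proof.
move=> LDL; apply: NCGD_of_dephase_coherences => t1 t2 t3 X t10 t12 t23.
have t20 : 0 <= t2 := le_trans t10 t12.
set V := Pi_c (E t2 t1 (dephase X)).
have LV t : t2 <= t -> L t V = 0.
  move=> t2t; have t0 : 0 <= t := le_trans t20 t2t.
  apply: (propagator_ker_invariant (P := fun Z => L t (Pi_c Z)) (A := fun _ _ => 0)) => //.
  - exact: linear_comp (generator_linear t0) Pi_c_linear.
  - by move=> u _ a Y Z; rewrite scaler0 addr0.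
  - by move=> T Z; exists 0 => u _ i j; rewrite mxE normr0.
  - move=> u Z /andP[t1u ut2]; have u0 : 0 <= u by rewrite (le_trans t10) ?ltW.
    by rewrite /Pi_c (linear_funB (generator_linear t0)) LDL ?subrr // (le_trans ut2).
  - by rewrite Pi_c_dephase (linear_fun0 (generator_linear t0)).
by rewrite propagator_stationary ?dephase_Pi_c // => u /andP[t2u _]; apply/LV/ltW.
Qed.

End Propagators.

Theorem corollary1 (R : realType) (d : nat)
  (L : R -> 'M[R[i]]_d -> 'M[R[i]]_d)
  (E : R -> R -> 'M[R[i]]_d -> 'M[R[i]]_d) :
  (forall t, 0 <= t -> is_generator (L t)) ->
  locally_bounded L ->
  propagators L E ->
  [/\ (* (i) L_pc(t) = 0 *)
      ((forall t, 0 <= t -> forall X, Lblock (@Pi_p R d) (L t) (@Pi_c R d) X = 0) ->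
         NCGD E),
      (* (ii) L_cp(t) = 0 *)
      ((forall t, 0 <= t -> forall X, Lblock (@Pi_c R d) (L t) (@Pi_p R d) X = 0) ->
         NCGD E),
      (* (iii) L(t2) o Delta o L(t1) = L(t2) o L(t1) *)
      ((forall t1 t2, 0 <= t1 -> t1 <= t2 -> forall X,
          L t2 (dephase (L t1 X)) = L t2 (L t1 X)) -> NCGD E) &
      (* (iv) [L(t), Delta] = 0 *)
      ((forall t, 0 <= t -> forall X, L t (dephase X) - dephase (L t X) = 0) ->
         NCGD E)].
Proof.
move=> L_gen L_bounded E_prop; split.
- exact: NCGD_Lpc0 L_gen L_bounded E_prop.
- exact: NCGD_Lcp0 L_gen L_bounded E_prop.
- exact: NCGD_LdephaseL L_gen L_bounded E_prop.
- move=> L_commute; apply: (NCGD_Lpc0 L_gen L_bounded E_prop) => t t0.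
  exact: Lpc_eq0_of_commute (generator_linear L_gen t0) (L_commute t t0).
Qed.
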